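(* Assume that $(X_j,Y_j)$, $j\in\mathbb{Z}$, is a memoryless process (i.e., $P_{X_1^N,Y_1^N}(x_1^N,y_1^N)=\prod_{j=1}^NP_{X,Y}(x_j,y_j)$), where $X_j\in\mathcal{U}$ with $|\mathcal{U}|=L$ and $Y_j\in\mathcal{Y}$ with $\mathcal{Y}$ finite. Then for every $n\ge1$, \[K_{n+1}\le\begin{cases}\frac{2(L-1)}{L}K_n^2 & \text{if } B_{n+1}=0,\\ \left(1+\frac L2\right)K_n & \text{if } B_{n+1}=1.\end{cases}\]
   Context: Identify $\mathcal{U}$ with $\{0,1,\dots,L-1\}$ with addition modulo $L$. For $U\in\mathcal{U}$ and finite-valued $Q$, the non-binary total variation distance is \[K^{(L)}(U|Q)=\sum_q\sum_{u'\ne u}\frac{P_Q(q)}{L-1}\cdot\frac{|P_{U|Q}(u|q)-P_{U|Q}(u'|q)|}{2},\] where the inner sum is over all ordered pairs $(u,u')\in\mathcal{U}^2$ with $u'\ne u$. Polarization setup: for $n\ge1$, $N=2^n$, $G_N=B_NG_2^{\otimes n}$ with $G_2=\begin{bmatrix}1&0\\1&1\end{bmatrix}$ and $B_N$ the bit-reversal permutation matrix; set $U_1^N=X_1^NG_N$ with arithmetic modulo $L$, and $Q_i=(U_1^{i-1},Y_1^N)$. Let $B_1,B_2,\dots$ be i.i.d. Bernoulli$(1/2)$ and $i-1=\sum_{j=1}^nB_j2^{n-j}$. The total variation process is $K_n=K^{(L)}(U_i|Q_i)$; $K_{n+1}$ is defined in the same way with $n+1$ in place of $n$ and the same $B_j$'s.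 *)

From HB Require Import structures.
From mathcomp Require Import all_boot all_order all_algebra.
From mathcomp Require Import zify.
Set Implicit Arguments. Unset Strict Implicit. Unset Printing Implicit Defensive.
Import Order.TTheory GRing.Theory Num.Theory.
Local Open Scope ring_scope.

Definition bit (k m : nat) : bool := odd (m %/ 2 ^ k).

Definition bitrev (n a : nat) : nat := (\sum_(k < n) bit k a * 2 ^ (n.-1 - k))%N.

(* index i-1 = sum_{j=1}^n B_j 2^{n-j}  (0-based channel index) *)
Definition idx (n : nat) (b : nat -> bool) : nat :=
  (\sum_(1 <= j < n.+1) b j * 2 ^ (n - j))%N.

Lemma idxS n b : idx n.+1 b = ((idx n b).*2 + b n.+1)%N.
Proof.
rewrite /idx big_nat_recr //= subnn expn0 muln1 -mul2n big_distrr /=.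
congr (_ + _)%N; apply: eq_big_nat => j /andP[_ hj].
by rewrite subSn // expnS mulnCA.
Qed.

Lemma idx_lt n b : (idx n b < 2 ^ n)%N.
Proof.
elim: n => [|n IH]; first by rewrite /idx big_geq.
rewrite idxS expnS mul2n -!muln2; case: (b n.+1) => /=; lia.
Qed.

Definition G2 (L : nat) : 'M['Z_L]_2 :=
  \matrix_(r < 2, c < 2) (if (r == 0 :> nat) && (c == 1 :> nat) then 0 else 1).

(* n-fold Kronecker power of G_2: entry (a,b) = prod_k G_2(a_k, b_k),
   where a_k, b_k are the binary digits of a, b *)
Definition G2pow (L n : nat) : 'M['Z_L]_(2 ^ n) :=
  \matrix_(a, c) \prod_(k < n) G2 L (inord (bit k a)) (inord (bit k c)).

Definition BN (L n : nat) : 'M['Z_L]_(2 ^ n) :=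
  \matrix_(a, c) ((c == bitrev n a :> nat)%:R).

Definition GN (L n : nat) : 'M['Z_L]_(2 ^ n) := BN L n *m G2pow L n.

Definition Uvec (L n : nat) (x : 'rV['Z_L]_(2 ^ n)) : 'rV['Z_L]_(2 ^ n) :=
  x *m GN L n.

(* p u q = P_{U,Q}(u,q) (joint pmf on finite U x Q) *)
Definition KL (R : realFieldType) (L : nat) (U Q : finType) (p : U -> Q -> R) : R :=
  let PQ q := \sum_(u : U) p u q in
  let PUQ u q := p u q / PQ q in
  \sum_(q : Q) \sum_(u : U) \sum_(u' : U | u' != u)
     PQ q / (L%:R - 1) * (`|PUQ u q - PUQ u' q| / 2).

(* Joint pmf of (U_i, Q_i) with Q_i = (U_1^{i-1}, Y_1^N), for the memoryless
   source with single-letter pmf P (0-based index i : U_1^{i-1} is indexed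
   by 'I_i). *)
Definition pUQ (R : realFieldType) (L : nat) (Y : finType) (P : 'Z_L -> Y -> R)
    (n : nat) (i : 'I_(2 ^ n)) (u : 'Z_L)
    (q : {ffun 'I_i -> 'Z_L} * {ffun 'I_(2 ^ n) -> Y}) : R :=
  \sum_(x : 'rV['Z_L]_(2 ^ n))
    (\prod_(j < 2 ^ n) P (x 0 j) (q.2 j)) *
    ((Uvec x 0 i == u) &&
     [forall k : 'I_i, Uvec x 0 (widen_ord (ltnW (ltn_ord i)) k) == q.1 k])%:R.

Definition Kproc (R : realFieldType) (L : nat) (Y : finType) (P : 'Z_L -> Y -> R)
    (n : nat) (b : nat -> bool) : R :=
  KL L (@pUQ R L Y P n (Ordinal (idx_lt n b))).

From HB Require Import structures.
From mathcomp Require Import all_boot all_order all_algebra.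
From mathcomp Require Import zify ring lra.
Set Implicit Arguments. Unset Strict Implicit. Unset Printing Implicit Defensive.
Import Order.TTheory GRing.Theory Num.Theory.
Local Open Scope ring_scope.

(* Write D(a) = \sum_(u,u') |a u - a u'|, so that K(U | Q) = \sum_q D(P_UQ(., q)) / (2(L-1)).
   One step of the recursion splits x into two halves whose length-N transforms V and W are
   independent copies of the level-n transform, with U_(2i) = V_i + W_i and U_(2i+1) = W_i
   (0-based indices).  Observing U_0^(2i-1) and Y amounts to observing the level-n data
   (V_0^(i-1), Y') and (W_0^(i-1), Y''); observing U_0^(2i) adds the sum s = V_i + W_i.
   Hence if B_(n+1) = 0 the new joint pmf is the convolution over Z_L of two old ones, and
   L D(a * b) <= D(a) D(b) yields K_(n+1) <= 2(L-1)/L K_n^2.  If B_(n+1) = 1 it is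
   p(s - u, q') p(u, q''), and the triangle inequality summed over s gives the stronger
   K_(n+1) <= 2 K_n <= (1 + L/2) K_n. *)

(** * Binary digits and the two halves of 'I_(2 ^ n.+1) *)

Lemma bit0_double m (t : bool) : bit 0 (2 * m + t) = t.
Proof. by rewrite /bit expn0 divn1 oddD oddM /=; case: t. Qed.

Lemma bitS_double k m (t : bool) : bit k.+1 (2 * m + t) = bit k m.
Proof.
rewrite /bit expnS divnMA; congr (odd (_ %/ _)).
by rewrite mulnC divnMDl // divn_small ?addn0 //; case: t.
Qed.

Lemma bit_add_exp2 k n c : (k < n)%N -> bit k (c + 2 ^ n) = bit k c.
Proof.
move=> lt_kn; rewrite /bit addnC divnDl; last by rewrite dvdn_exp2l // ltnW.
rewrite oddD -(subnKC (ltnW lt_kn)) expnD mulKn ?expn_gt0 //.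
by rewrite oddX /= -(subnSK lt_kn).
Qed.

Lemma bit_small n c : (c < 2 ^ n)%N -> bit n c = false.
Proof. by move=> c_small; rewrite /bit divn_small. Qed.

Lemma bit_add_exp2_small n c : (c < 2 ^ n)%N -> bit n (c + 2 ^ n) = true.
Proof.
move=> c_small; rewrite /bit -{1}(mul1n (2 ^ n)%N) addnC divnMDl ?expn_gt0 //.
by rewrite divn_small.
Qed.

Lemma bitrevS n c : bitrev n.+1 c = (2 * bitrev n c + bit n c)%N.
Proof.
rewrite /bitrev big_ord_recr /= subnn expn0 muln1; congr (_ + _)%N.
rewrite big_distrr /=; apply: eq_bigr => k _.
rewrite mulnCA -expnS; congr (_ * 2 ^ _)%N; have := ltn_ord k; lia.
Qed.

Lemma bitrev_add_exp2 n c : bitrev n (c + 2 ^ n) = bitrev n c.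
Proof. by apply: eq_bigr => k _; rewrite bit_add_exp2. Qed.

Lemma bitrev_lt n c : (bitrev n c < 2 ^ n)%N.
Proof.
elim: n => [|n IH]; first by rewrite /bitrev big_ord0.
by rewrite bitrevS expnS; case: (bit n c) => /=; lia.
Qed.

Section LowHighHalves.
Variable n : nat.

Lemma lo_ord_proof (c : 'I_(2 ^ n)) : (c < 2 ^ n.+1)%N.
Proof. by have := ltn_ord c; rewrite expnS; lia. Qed.

Lemma hi_ord_proof (c : 'I_(2 ^ n)) : (c + 2 ^ n < 2 ^ n.+1)%N.
Proof. by have := ltn_ord c; rewrite expnS; lia. Qed.

Definition lo_ord (c : 'I_(2 ^ n)) : 'I_(2 ^ n.+1) := Ordinal (lo_ord_proof c).
Definition hi_ord (c : 'I_(2 ^ n)) : 'I_(2 ^ n.+1) := Ordinal (hi_ord_proof c).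

Lemma ord_exp2S_cases (c : 'I_(2 ^ n.+1)) :
  (exists k, c = lo_ord k) \/ (exists k, c = hi_ord k).
Proof.
have [lt_c|le_c] := ltnP c (2 ^ n); first by left; exists (Ordinal lt_c); apply: val_inj.
have lt_c : (c - 2 ^ n < 2 ^ n)%N.
  by have := ltn_ord c; rewrite [X in (_ < X)%N -> _]expnS; lia.
by right; exists (Ordinal lt_c); apply: val_inj; rewrite /= subnK.
Qed.

Lemma big_ord_exp2S (R : Type) (idx : R) (op : Monoid.com_law idx)
    (F : 'I_(2 ^ n.+1) -> R) :
  \big[op/idx]_(c < 2 ^ n.+1) F c =
  op (\big[op/idx]_(c < 2 ^ n) F (lo_ord c)) (\big[op/idx]_(c < 2 ^ n) F (hi_ord c)).
Proof.
have big_nat_ord m (G : 'I_m -> R) :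
    \big[op/idx]_(c < m) G c = \big[op/idx]_(0 <= c < m) oapp G idx (insub c).
  by rewrite big_mkord; apply: eq_bigr => c _; rewrite valK.
rewrite big_nat_ord (big_cat_nat _ (n := 2 ^ n)) //=; last by rewrite expnS; lia.
rewrite -{2}(add0n (2 ^ n)%N) big_addn.
have -> : (2 ^ n.+1 - 2 ^ n = 2 ^ n)%N by rewrite expnS; lia.
rewrite !big_mkord; congr (op _ _); apply: eq_bigr => c _.
  by rewrite insubT ?lo_ord_proof //= => lt_c; congr F; apply: val_inj.
by rewrite insubT ?hi_ord_proof //= => lt_c; congr F; apply: val_inj.
Qed.

Lemma ffun_exp2S_inj (T : Type) (f g : {ffun 'I_(2 ^ n.+1) -> T}) :
  (forall k, f (lo_ord k) = g (lo_ord k)) -> (forall k, f (hi_ord k) = g (hi_ord k)) ->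
  f = g.
Proof. by move=> Elo Ehi; apply/ffunP => c; case: (ord_exp2S_cases c) => -[k ->]. Qed.

End LowHighHalves.

(** * The polar transform *)

Section PolarTransform.
Variable L : nat.
Local Notation Z := 'Z_L.

Definition g2 (e a : bool) : Z := if ~~ e && a then 0 else 1.

Definition kron_g2 n (e a : nat) : Z := \prod_(k < n) g2 (bit k e) (bit k a).

Definition polar n (x : 'rV[Z]_(2 ^ n)) (j : nat) : Z :=
  \sum_(c < 2 ^ n) x 0 c * kron_g2 n (bitrev n c) j.

Lemma G2_inord (e a : bool) : G2 L (inord e) (inord a) = g2 e a.
Proof. by rewrite mxE /g2 !inordK; case: e; case: a. Qed.

Lemma Uvec_polar n x (k : 'I_(2 ^ n)) : Uvec x 0 k = polar x k.
Proof.
rewrite mxE; apply: eq_bigr => c _; congr (_ * _).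
rewrite mxE (bigD1 (Ordinal (bitrev_lt n c))) //= big1 ?addr0.
  rewrite !mxE eqxx mul1r; apply: eq_bigr => i _; exact: G2_inord.
move=> d ne_d; rewrite mxE (_ : _ == _ = false) ?mul0r //.
by apply/negbTE; apply: contra ne_d => /eqP eq_d; apply/eqP/val_inj.
Qed.

Lemma kron_g2_double n e (t : bool) j (c : bool) :
  kron_g2 n.+1 (2 * e + t) (2 * j + c) = g2 t c * kron_g2 n e j.
Proof.
rewrite /kron_g2 big_ord_recl /= !bit0_double; congr (_ * _).
by apply: eq_bigr => k _; rewrite /bump /= !add1n !bitS_double.
Qed.

Variable n : nat.

Definition lo (x : 'rV[Z]_(2 ^ n.+1)) : 'rV[Z]_(2 ^ n) := \row_c x 0 (lo_ord c).
Definition hi (x : 'rV[Z]_(2 ^ n.+1)) : 'rV[Z]_(2 ^ n) := \row_c x 0 (hi_ord c).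

Definition join (x1 x2 : 'rV[Z]_(2 ^ n)) : 'rV[Z]_(2 ^ n.+1) :=
  \row_c (if insub (val c) : option 'I_(2 ^ n) is Some k then x1 0 k
          else if insub (val c - 2 ^ n)%N : option 'I_(2 ^ n) is Some k then x2 0 k
          else 0).

Lemma join_lo x1 x2 c : join x1 x2 0 (lo_ord c) = x1 0 c.
Proof. by rewrite mxE valK. Qed.

Lemma join_hi x1 x2 c : join x1 x2 0 (hi_ord c) = x2 0 c.
Proof.
rewrite mxE /= insubF; last by rewrite ltnNge leq_addl.
by rewrite addnK valK.
Qed.

Lemma join_lohi x : join (lo x) (hi x) = x.
Proof.
apply/rowP => c; case: (ord_exp2S_cases c) => -[k ->].
  by rewrite join_lo mxE.
by rewrite join_hi mxE.
Qed.

Lemma sum_join (R : nmodType) (F : 'rV[Z]_(2 ^ n.+1) -> R) :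
  \sum_x F x = \sum_x1 \sum_x2 F (join x1 x2).
Proof.
rewrite pair_big (reindex (fun p => join p.1 p.2)) //=.
exists (fun x => (lo x, hi x)) => [[x1 x2] _|x _]; last by rewrite join_lohi.
by congr pair; apply/rowP => c; rewrite mxE ?join_lo ?join_hi.
Qed.

Lemma polar_join x1 x2 j (c : bool) :
  polar (join x1 x2) (2 * j + c) = (if c then 0 else polar x1 j) + polar x2 j.
Proof.
rewrite /polar big_ord_exp2S; congr (_ + _).
  under eq_bigr => k _ do rewrite join_lo bitrevS (bit_small (ltn_ord k)) kron_g2_double.
  case: c; last by apply: eq_bigr => k _; rewrite mul1r.
  by rewrite big1 // => k _; rewrite mul0r mulr0.
apply: eq_bigr => k _.
rewrite join_hi bitrevS (bit_add_exp2_small (ltn_ord k)) bitrev_add_exp2.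
by rewrite kron_g2_double mul1r.
Qed.

End PolarTransform.

(** * Absolute deviations *)

Lemma sum_inj_le (R : numDomainType) (T T' : finType) (phi : T -> T') (G : T' -> R) :
  injective phi -> (forall t, 0 <= G t) -> \sum_t G (phi t) <= \sum_t G t.
Proof.
move=> inj_phi G_ge0; rewrite -big_imset /=; last by move=> t t' _ _ /inj_phi.
by rewrite [leRHS](bigID (mem (phi @: predT))) /= lerDl sumr_ge0.
Qed.

Section AbsoluteDeviation.
Variable R : numDomainType.

Definition absdev (T : finType) (a : T -> R) : R := \sum_u \sum_u' `|a u - a u'|.

Lemma absdev_ge0 (T : finType) (a : T -> R) : 0 <= absdev a.
Proof. by apply: sumr_ge0 => u _; apply: sumr_ge0. Qed.

Lemma eq_absdev (T : finType) (a b : T -> R) : a =1 b -> absdev a = absdev b.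
Proof. by move=> eq_ab; apply: eq_bigr => u _; apply: eq_bigr => u' _; rewrite !eq_ab. Qed.

Variable V : finZmodType.

Lemma sum_subl (F : V -> R) (w : V) : \sum_v F (w - v) = \sum_v F v.
Proof. by rewrite [RHS](reindex_inj (subrI w)). Qed.

Lemma sum_subr (F : V -> R) (w : V) : \sum_v F (v - w) = \sum_v F v.
Proof. by rewrite [RHS](reindex_inj (addIr (- w))). Qed.

Definition conv (a b : V -> R) (u : V) : R := \sum_v a v * b (u - v).

(* Since b(u - .) - b(u' - .) sums to zero, any constant c can be subtracted from a. *)
Lemma absdev_conv_le (a b : V -> R) (c : R) :
  absdev (conv a b) <= (\sum_v `|a v - c|) * absdev b.
Proof.
have conv_diff u u' : conv a b u - conv a b u' =
    \sum_v (a v - c) * (b (u - v) - b (u' - v)).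
  have sum_diff0 : \sum_v (b (u - v) - b (u' - v)) = 0.
    by rewrite sumrB !sum_subl subrr.
  under [RHS]eq_bigr do rewrite mulrBl.
  by rewrite sumrB -mulr_sumr sum_diff0 mulr0 subr0 -sumrB; under eq_bigr do rewrite -mulrBr.
apply: (@le_trans _ _ (\sum_u \sum_u' \sum_v `|a v - c| * `|b (u - v) - b (u' - v)|)).
  apply: ler_sum => u _; apply: ler_sum => u' _; rewrite conv_diff.
  by apply: (le_trans (ler_norm_sum _ _ _)); apply: ler_sum => v _; rewrite normrM.
rewrite le_eqVlt -/(absdev b) mulr_suml; apply/orP; left; apply/eqP.
under eq_bigr do rewrite exchange_big /=.
rewrite exchange_big /=; apply: eq_bigr => v _.
rewrite mulr_sumr -(sum_subr (fun u => `|a v - c| * \sum_u' `|b u - b u'|) v).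
apply: eq_bigr => u _.
by rewrite mulr_sumr -(sum_subr (fun u' => `|a v - c| * `|b (u - v) - b u'|) v).
Qed.

Lemma absdev_conv (a b : V -> R) : #|V|%:R * absdev (conv a b) <= absdev a * absdev b.
Proof.
have -> : absdev a = \sum_w \sum_v `|a v - a w| by exact: exchange_big.
rewrite mulr_natl -sumr_const mulr_suml.
by apply: ler_sum => w _; apply: absdev_conv_le.
Qed.

Lemma sum_absdev_shift_mul (a b : V -> R) :
  (forall u, 0 <= a u) -> (forall u, 0 <= b u) ->
  \sum_s absdev (fun w => a (s - w) * b w) <= (\sum_u a u) * absdev b + (\sum_u b u) * absdev a.
Proof.
move=> a_ge0 b_ge0.
apply: (@le_trans _ _ (\sum_s \sum_w \sum_w'
   (a (s - w) * `|b w - b w'| + b w' * `|a (s - w) - a (s - w')|))).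
  apply: ler_sum => s _; apply: ler_sum => w _; apply: ler_sum => w' _.
  have -> : a (s - w) * b w - a (s - w') * b w' =
     a (s - w) * (b w - b w') + b w' * (a (s - w) - a (s - w')) by ring.
  apply: (le_trans (ler_normD _ _)).
  by rewrite !normrM (ger0_norm (a_ge0 _)) (ger0_norm (b_ge0 _)).
rewrite le_eqVlt; apply/orP; left; apply/eqP.
under eq_bigr => s _ do under eq_bigr => w _ do rewrite big_split /=.
under eq_bigr => s _ do rewrite big_split /=.
rewrite big_split /=; congr (_ + _).
  rewrite exchange_big mulr_sumr; apply: eq_bigr => w _.
  rewrite exchange_big mulr_sumr; apply: eq_bigr => w' _.
  by rewrite -mulr_suml (sum_subr a w).
under eq_bigr => s _ do rewrite exchange_big /=.
rewrite exchange_big mulr_suml; apply: eq_bigr => w' _.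
under eq_bigr => s _ do rewrite -mulr_sumr.
rewrite -mulr_sumr; congr (_ * _).
under eq_bigr => s _ do rewrite (sum_subl (fun t => `|a t - a (s - w')|) s).
rewrite exchange_big; apply: eq_bigr => t _.
exact: (sum_subr (fun s => `|a t - a s|) w').
Qed.

End AbsoluteDeviation.

Lemma KL_absdev (R : realFieldType) (L : nat) (U Q : finType) (p : U -> Q -> R) :
  (forall u q, 0 <= p u q) ->
  KL L p = (2 * (L%:R - 1))^-1 * \sum_q absdev (p^~ q).
Proof.
move=> p_ge0; rewrite /KL mulr_sumr; apply: eq_bigr => q _.
rewrite mulr_sumr; apply: eq_bigr => u _.
rewrite [RHS]mulr_sumr [RHS](bigD1 u) //= subrr normr0 mulr0 add0r.
apply: eq_bigr => u' _.
set S := \sum_v p v q.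
have [S0|S_neq0] := eqVneq S 0.
  have p0 v : p v q = 0 by apply: (psumr_eq0P (fun i _ => p_ge0 i q) S0).
  by rewrite S0 !p0 !(subrr, mul0r, mulr0, normr0).
have S_gt0 : 0 < S by rewrite lt0r S_neq0 sumr_ge0.
have Sinv_ge0 : 0 <= S^-1 by rewrite invr_ge0 ltW.
rewrite -mulrBl normrM (ger0_norm Sinv_ge0).
rewrite (_ : _ / _ * _ = (S * S^-1) * ((2 * (L%:R - 1))^-1 * `|p u q - p u' q|)).
  by rewrite mulfV // mul1r.
rewrite invfM; ring.
Qed.

(** * The polarized joint pmf *)

Section ObservedPrefix.
Variable V : zmodType.

Definition zext m (g : {ffun 'I_m -> V}) (j : nat) : V := oapp g 0 (insub j).

Lemma zextE m (g : {ffun 'I_m -> V}) (k : 'I_m) : zext g k = g k.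
Proof. by rewrite /zext valK. Qed.

Lemma zext_ffun m (F : nat -> V) j : (j < m)%N -> zext [ffun k : 'I_m => F k] j = F j.
Proof. by move=> lt_jm; rewrite /zext insubT /= ffunE. Qed.

Definition is_prefix (f : nat -> V) m (g : {ffun 'I_m -> V}) : bool :=
  [forall k : 'I_m, f k == g k].

Lemma is_prefixP f m g :
  reflect (forall j, (j < m)%N -> f j = zext g j) (@is_prefix f m g).
Proof.
apply: (iffP forallP) => [pre_g j lt_jm|pre_g k]; last by rewrite -zextE -pre_g.
by have /eqP := pre_g (Ordinal lt_jm); rewrite -(zextE g).
Qed.

Lemma is_prefix_eq f m (g : {ffun 'I_m -> V}) : is_prefix f g = (g == [ffun k : 'I_m => f k]).
Proof.
apply/forallP/eqP => [pre_g|-> k]; last by rewrite ffunE.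
by apply/ffunP => k; rewrite ffunE; apply/esym/eqP.
Qed.

(* Inverse of the butterfly U_(2k) = V_k + W_k, U_(2k+1) = W_k on an observed prefix. *)
Definition prefix_lo m I (g : {ffun 'I_m -> V}) : {ffun 'I_I -> V} :=
  [ffun k : 'I_I => zext g (2 * k) - zext g (2 * k + 1)].
Definition prefix_hi m I (g : {ffun 'I_m -> V}) : {ffun 'I_I -> V} :=
  [ffun k : 'I_I => zext g (2 * k + 1)].

Lemma zext_prefix_lo m I (g : {ffun 'I_m -> V}) k : (k < I)%N ->
  zext (prefix_lo I g) k = zext g (2 * k) - zext g (2 * k + 1).
Proof. exact: (zext_ffun (fun k => zext g (2 * k) - zext g (2 * k + 1))). Qed.

Lemma zext_prefix_hi m I (g : {ffun 'I_m -> V}) k : (k < I)%N ->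
  zext (prefix_hi I g) k = zext g (2 * k + 1).
Proof. exact: (zext_ffun (fun k => zext g (2 * k + 1))). Qed.

Variables (U Vl Vh : nat -> V).
Hypothesis butterfly : forall j (c : bool), U (2 * j + c)%N = (if c then 0 else Vl j) + Vh j.

Lemma is_prefix_butterfly m I (b : bool) (g : {ffun 'I_m -> V}) : m = (2 * I + b)%N ->
  is_prefix U g = [&& is_prefix Vl (prefix_lo I g), is_prefix Vh (prefix_hi I g) &
                     b ==> (Vl I + Vh I == zext g (2 * I))].
Proof.
move=> def_m.
have U_even j : U (2 * j)%N = Vl j + Vh j by have := butterfly j false; rewrite addn0.
have U_odd j : U (2 * j + 1)%N = Vh j by rewrite (butterfly j true) add0r.
apply/is_prefixP/and3P => [pre_g|[/is_prefixP pre_lo /is_prefixP pre_hi /implyP pre_s]].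
  split.
  - apply/is_prefixP => k lt_kI.
    by rewrite zext_prefix_lo // -!pre_g ?U_even ?U_odd ?addrK //; lia.
  - apply/is_prefixP => k lt_kI.
    by rewrite zext_prefix_hi // -pre_g ?U_odd //; lia.
  - apply/implyP => b_true; apply/eqP.
    by rewrite -U_even pre_g //; move: b_true; case: b def_m; lia.
move=> j lt_jm; rewrite -(odd_double_half j) addnC -mul2n.
have [lt_jI|le_Ij] := ltnP j./2 I.
  rewrite butterfly pre_hi // zext_prefix_hi //.
  by case: (odd j) => /=; rewrite ?add0r // pre_lo // zext_prefix_lo // subrK addn0.
have j_eq := odd_double_half j; rewrite -mul2n in j_eq.
have [b_true j_even] : b /\ odd j = false.
  by move: def_m lt_jm le_Ij j_eq; case: (b); case: (odd j) => //=; lia.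
have def_j : j./2 = I by move: def_m lt_jm le_Ij j_eq; rewrite j_even b_true /=; lia.
by rewrite j_even def_j addn0 U_even; apply/eqP/pre_s.
Qed.

End ObservedPrefix.

Lemma prefix_lohi_inj (V : zmodType) m I (b : bool) (g g' : {ffun 'I_m -> V}) :
  m = (2 * I + b)%N -> prefix_lo I g = prefix_lo I g' -> prefix_hi I g = prefix_hi I g' ->
  (b -> zext g (2 * I) = zext g' (2 * I)) -> g = g'.
Proof.
move=> def_m Elo Ehi Es.
have E_odd k : (k < I)%N -> zext g (2 * k + 1) = zext g' (2 * k + 1).
  by move=> lt_kI; have := congr1 (fun f => zext f k) Ehi; rewrite !zext_prefix_hi.
have E_even k : (k < I)%N -> zext g (2 * k) = zext g' (2 * k).
  move=> lt_kI; have := congr1 (fun f => zext f k) Elo.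
  by rewrite !zext_prefix_lo // E_odd // => /addIr.
apply/ffunP => j; rewrite -!zextE.
have j_eq := odd_double_half j; rewrite -mul2n in j_eq.
rewrite -j_eq addnC.
have [lt_jI|le_Ij] := ltnP j./2 I.
  by case: (odd j); rewrite ?addn0 ?E_even ?E_odd.
have lt_jm := ltn_ord j.
have [b_true j_even] : b /\ odd j = false.
  by move: def_m lt_jm le_Ij j_eq; case: (b); case: (odd j) => //=; lia.
have def_j : j./2 = I by move: def_m lt_jm le_Ij j_eq; rewrite j_even b_true /=; lia.
by rewrite j_even def_j addn0 Es.
Qed.

Lemma natr_andb (R : pzSemiRingType) (a b : bool) : ((a && b)%:R : R) = a%:R * b%:R.
Proof. by case: a; case: b; rewrite ?mul1r ?mul0r. Qed.

Lemma sum_eq_natr_mul (R : pzSemiRingType) (T : finType) (F : T -> R) (a : T) :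
  \sum_t (a == t)%:R * F t = F a.
Proof.
rewrite (bigD1 a) //= eqxx mul1r big1 ?addr0 // => t ne_ta.
by rewrite eq_sym (negbTE ne_ta) mul0r.
Qed.

Lemma sum_eq_natr (R : pzSemiRingType) (T : finType) (a : T) : \sum_t ((a == t)%:R : R) = 1.
Proof.
by rewrite (bigD1 a) //= eqxx big1 ?addr0 // => t; rewrite eq_sym => /negbTE ->.
Qed.

Section PolarizedPmf.
Variables (R : realFieldType) (L : nat) (Y : finType) (P : 'Z_L -> Y -> R).
Local Notation Z := 'Z_L.
Local Notation pmf n i := (@pUQ R L Y P n i).
Local Notation obs n I := ({ffun 'I_I -> Z} * {ffun 'I_(2 ^ n) -> Y})%type.

Definition prod_pmf n (x : 'rV[Z]_(2 ^ n)) (y : {ffun 'I_(2 ^ n) -> Y}) : R :=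
  \prod_(j < 2 ^ n) P (x 0 j) (y j).

Lemma pUQ_polar n (i : 'I_(2 ^ n)) u q :
  pmf n i u q = \sum_x prod_pmf x q.2 * ((polar x i == u) && is_prefix (polar x) q.1)%:R.
Proof.
apply: eq_bigr => x _; rewrite Uvec_polar; congr (_ * (_ && _)%:R).
by apply: eq_forallb => k; rewrite Uvec_polar.
Qed.

Hypothesis P_ge0 : forall u y, 0 <= P u y.

Lemma pUQ_ge0 n i u q : 0 <= pmf n i u q.
Proof.
apply: sumr_ge0 => x _.
by apply: mulr_ge0; [apply: prodr_ge0 | apply: ler0n].
Qed.

Hypothesis P_mass : \sum_u \sum_y P u y = 1.

Lemma prod_pmf_mass n : \sum_y \sum_(x : 'rV[Z]_(2 ^ n)) prod_pmf x y = 1.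
Proof.
rewrite exchange_big /=.
under eq_bigr => x _ do rewrite /prod_pmf -(bigA_distr_bigA (fun j v => P (x 0 j) v)) /=.
rewrite (reindex (fun f : {ffun 'I_(2 ^ n) -> Z} => \row_j f j)) /=; last first.
  exists (fun x : 'rV[Z]_(2 ^ n) => [ffun j => x 0 j]) => [f _|x _].
    by apply/ffunP => j; rewrite ffunE mxE.
  by apply/rowP => j; rewrite mxE ffunE.
under eq_bigr => f _ do under eq_bigr => j _ do rewrite mxE.
by rewrite -(bigA_distr_bigA (fun j u => \sum_v P u v)) /= big1.
Qed.

Lemma pUQ_mass n (I : 'I_(2 ^ n)) : \sum_q \sum_u pmf n I u q = 1.
Proof.
have -> : \sum_q \sum_u pmf n I u q = \sum_g \sum_y \sum_u pmf n I u (g, y).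
  by rewrite [RHS]pair_bigA; apply: eq_bigr => -[].
rewrite -(prod_pmf_mass n) exchange_big /=; apply: eq_bigr => y _.
under eq_bigr => g _ do under eq_bigr => u _ do rewrite pUQ_polar /=.
under eq_bigr => g _ do rewrite exchange_big /=.
rewrite exchange_big /=; apply: eq_bigr => x _.
under eq_bigr => g _ do under eq_bigr => u _ do rewrite natr_andb mulrA.
under eq_bigr => g _ do rewrite -mulr_suml -mulr_sumr sum_eq_natr mulr1.
under eq_bigr => g _ do rewrite is_prefix_eq eq_sym.
by rewrite -mulr_sumr sum_eq_natr mulr1.
Qed.

Definition ffun_lo n (y : {ffun 'I_(2 ^ n.+1) -> Y}) : {ffun 'I_(2 ^ n) -> Y} :=
  [ffun j => y (lo_ord j)].
Definition ffun_hi n (y : {ffun 'I_(2 ^ n.+1) -> Y}) : {ffun 'I_(2 ^ n) -> Y} :=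
  [ffun j => y (hi_ord j)].

Lemma prod_pmf_join n (x1 x2 : 'rV[Z]_(2 ^ n)) y :
  prod_pmf (join x1 x2) y = prod_pmf x1 (ffun_lo y) * prod_pmf x2 (ffun_hi y).
Proof.
by rewrite /prod_pmf big_ord_exp2S; congr (_ * _); apply: eq_bigr => c _;
  rewrite ffunE ?join_lo ?join_hi.
Qed.

Lemma ffun_lohi_inj n (y y' : {ffun 'I_(2 ^ n.+1) -> Y}) :
  ffun_lo y = ffun_lo y' -> ffun_hi y = ffun_hi y' -> y = y'.
Proof.
move=> /ffunP Elo /ffunP Ehi; apply: ffun_exp2S_inj => k.
  by have := Elo k; rewrite !ffunE.
by have := Ehi k; rewrite !ffunE.
Qed.

Definition split_obs n m I (q : obs n.+1 m) : obs n I * obs n I :=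
  ((prefix_lo I q.1, ffun_lo q.2), (prefix_hi I q.1, ffun_hi q.2)).

Lemma split_obs_inj n m I : m = (2 * I)%N -> injective (@split_obs n m I).
Proof.
move=> def_m [g y] [g' y'] [Elo Eylo Ehi Eyhi]; congr pair; last exact: ffun_lohi_inj.
by apply: (prefix_lohi_inj (b := false)) Elo Ehi _; rewrite ?addn0.
Qed.

Lemma split_obs_sum_inj n m I : m = (2 * I + 1)%N ->
  injective (fun q : obs n.+1 m => (zext q.1 (2 * I), split_obs I q)).
Proof.
move=> def_m [g y] [g' y'] [Es Elo Eylo Ehi Eyhi]; congr pair; last exact: ffun_lohi_inj.
exact: (prefix_lohi_inj (b := true)) Elo Ehi _.
Qed.

Lemma pUQ_even n (A : 'I_(2 ^ n.+1)) (I : 'I_(2 ^ n)) : val A = (2 * I)%N -> forall u q,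
  pmf n.+1 A u q = conv (pmf n I ^~ (split_obs I q).1) (pmf n I ^~ (split_obs I q).2) u.
Proof.
move=> def_A u q; have def_A0 : val A = (2 * I + false)%N by rewrite addn0.
rewrite pUQ_polar sum_join /conv.
under [RHS]eq_bigr => v _ do rewrite !pUQ_polar big_distrlr /=.
rewrite [RHS]exchange_big; apply: eq_bigr => x1 _.
rewrite [RHS]exchange_big; apply: eq_bigr => x2 _.
rewrite prod_pmf_join (is_prefix_butterfly (polar_join x1 x2) q.1 def_A0) andbT.
have -> : polar (join x1 x2) A = polar x1 I + polar x2 I by rewrite def_A0 polar_join.
set p1 := prod_pmf x1 _; set p2 := prod_pmf x2 _.
set e1 := is_prefix (polar x1) _; set e2 := is_prefix (polar x2) _.
rewrite (eq_bigr (fun v =>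
    (polar x1 I == v)%:R * (p1 * p2 * e1%:R * e2%:R * (polar x2 I == u - v)%:R))); last first.
  by move=> v _; rewrite !natr_andb; ring.
have -> : (polar x1 I + polar x2 I == u) = (polar x2 I == u - polar x1 I).
  by rewrite [RHS]eq_sym subr_eq addrC eq_sym.
by rewrite sum_eq_natr_mul !natr_andb; ring.
Qed.

Lemma pUQ_odd n (A : 'I_(2 ^ n.+1)) (I : 'I_(2 ^ n)) : val A = (2 * I + 1)%N -> forall u q,
  pmf n.+1 A u q =
  pmf n I (zext q.1 (2 * I) - u) (split_obs I q).1 * pmf n I u (split_obs I q).2.
Proof.
move=> def_A u q; rewrite pUQ_polar sum_join !pUQ_polar big_distrlr /=.
apply: eq_bigr => x1 _; apply: eq_bigr => x2 _.
rewrite prod_pmf_join (is_prefix_butterfly (polar_join x1 x2) q.1 (def_A : _ = 2 * I + true)%N).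
have -> : polar (join x1 x2) A = polar x2 I by rewrite def_A (polar_join x1 x2 I true) add0r.
have [-> | _] := eqVneq (polar x2 I) u; last first.
  by rewrite /= !natr_andb; ring.
have -> : (polar x1 I + u == zext q.1 (2 * I)) = (polar x1 I == zext q.1 (2 * I) - u).
  by rewrite [RHS]eq_sym subr_eq eq_sym.
by rewrite /= !natr_andb; ring.
Qed.

Lemma sum_absdev_pUQ_even n (A : 'I_(2 ^ n.+1)) (I : 'I_(2 ^ n)) :
  (1 < L)%N -> val A = (2 * I)%N ->
  L%:R * \sum_q absdev (pmf n.+1 A ^~ q) <= (\sum_q absdev (pmf n I ^~ q)) ^+ 2.
Proof.
move=> lt1L def_A; have card_Z : #|{: Z}| = L by rewrite card_ord Zp_cast.
pose G (p : obs n I * obs n I) := absdev (pmf n I ^~ p.1) * absdev (pmf n I ^~ p.2).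
rewrite expr2 big_distrlr [leRHS]pair_bigA mulr_sumr /=.
have G_ge0 p : 0 <= G p by apply: mulr_ge0; apply: absdev_ge0.
apply: (le_trans _ (sum_inj_le (split_obs_inj def_A) G_ge0)); apply: ler_sum => q _.
by rewrite (eq_absdev (pUQ_even def_A ^~ q)) -[X in X%:R]card_Z absdev_conv.
Qed.

Lemma sum_absdev_pUQ_odd n (A : 'I_(2 ^ n.+1)) (I : 'I_(2 ^ n)) :
  val A = (2 * I + 1)%N ->
  \sum_q absdev (pmf n.+1 A ^~ q) <= 2 * \sum_q absdev (pmf n I ^~ q).
Proof.
move=> def_A.
pose G (p : Z * (obs n I * obs n I)) :=
  absdev (fun w => pmf n I (p.1 - w) p.2.1 * pmf n I w p.2.2).
have -> : \sum_q absdev (pmf n.+1 A ^~ q) =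
          \sum_(q : obs n.+1 A) G (zext q.1 (2 * I), split_obs I q).
  by apply: eq_bigr => q _; apply: eq_absdev => u; rewrite (pUQ_odd def_A).
apply: le_trans (sum_inj_le (G := G) (split_obs_sum_inj def_A) (fun=> absdev_ge0 _)) _.
have -> : \sum_p G p = \sum_q' \sum_q'' \sum_s G (s, (q', q'')).
  by rewrite [RHS]pair_bigA [RHS]exchange_big [RHS]pair_bigA; apply: eq_bigr => -[? []].
apply: (@le_trans _ _ (\sum_q' \sum_q''
  ((\sum_u pmf n I u q') * absdev (pmf n I ^~ q'') +
   (\sum_u pmf n I u q'') * absdev (pmf n I ^~ q')))).
  apply: ler_sum => q' _; apply: ler_sum => q'' _.
  by apply: (sum_absdev_shift_mul (a := pmf n I ^~ q') (b := pmf n I ^~ q'')) => u;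
    apply: pUQ_ge0.
under eq_bigr => q' _ do rewrite big_split /= -mulr_sumr -mulr_suml pUQ_mass mul1r.
by rewrite big_split /= -mulr_suml pUQ_mass mul1r mulr_natl mulr2n.
Qed.

End PolarizedPmf.

Theorem proposition3 (R : realFieldType) (L : nat) (Y : finType)
    (P : 'Z_L -> Y -> R) (b : nat -> bool) (n : nat) :
  (1 < L)%N ->
  (forall u y, 0 <= P u y) ->
  \sum_(u : 'Z_L) \sum_(y : Y) P u y = 1 ->
  (1 <= n)%N ->
  Kproc P n.+1 b <=
    (if b n.+1 then (1 + L%:R / 2) * Kproc P n b
     else 2 * (L%:R - 1) / L%:R * Kproc P n b ^+ 2).
Proof.
move=> lt1L P_ge0 P_mass _.
have def_A : val (Ordinal (idx_lt n.+1 b)) = (2 * Ordinal (idx_lt n b) + b n.+1)%N.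
  by rewrite /= idxS mul2n.
rewrite /Kproc !KL_absdev; try exact: pUQ_ge0.
set T := \sum_q _; set S := \sum_q _; set c := (2 * _)^-1.
have S_ge0 : 0 <= S by apply: sumr_ge0 => q _; apply: absdev_ge0.
have L_ge2 : 2 <= L%:R :> R by rewrite ler_nat.
have c_gt0 : 0 < c by rewrite invr_gt0; lra.
case: (b n.+1) def_A => def_A.
  have T_le : T <= 2 * S := sum_absdev_pUQ_odd P_ge0 P_mass def_A.
  have cS_ge0 : 0 <= c * S := mulr_ge0 (ltW c_gt0) S_ge0.
  apply: (le_trans (ler_wpM2l (ltW c_gt0) T_le)); rewrite mulrCA ler_wpM2r //; lra.
have T_le : L%:R * T <= S ^+ 2 by apply: sum_absdev_pUQ_even; rewrite // def_A addn0.
have -> : 2 * (L%:R - 1) / L%:R * (c * S) ^+ 2 = c * (S ^+ 2 / L%:R).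
  by rewrite /c; field; rewrite !gt_eqF //; lra.
by rewrite ler_pM2l // ler_pdivlMr 1?mulrC //; lra.
Qed.
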